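(* For all integers $s\geq 2$ and $r\geq 1$, $$\sum_{i=1}^{s-2}2^{i-1}\binom{2r+i-1}{i}\sigma(s-i,2r+i)+2^{s-1}\sum_{j=0}^{2r-2}(-1)^j\binom{s+j-1}{j}\lambda(s+j)\lambda(2r-j)$$ $$-2^{s-2}\binom{s+2r-2}{s-1}\sum_{p\geq 1}\frac{H_p}{(2p+1)^{s+2r-1}}-2^{s-1}\binom{s+2r-2}{s-1}\lambda(s+2r-1)\ln 2=0,$$ where an empty sum equals $0$.
   Context: $H_p=1+\frac12+\cdots+\frac1p$. For integers $t\geq 1$, $n\geq 1$ let $S_n^{(t)}=\sum_{k=1}^{n}\frac{1}{(2k-1)^t}$, and for integers $s\geq 2$, $t\geq 1$ let $\sigma(s,t)=\sum_{n\geq 1}\frac{S_n^{(t)}}{n^s}$. For real $s>1$, $\lambda(s)=\sum_{n\geq 1}\frac{1}{(2n-1)^s}$. *)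

From Stdlib Require Import Reals.
From Coquelicot Require Import Coquelicot.
Open Scope R_scope.

Fixpoint fsum (n : nat) (f : nat -> R) : R :=
  match n with
  | O => 0
  | S m => fsum m f + f m
  end.

Definition Hn (p : nat) : R := fsum p (fun k => / INR (k + 1)).

Definition Sodd (n t : nat) : R :=
  fsum n (fun k => / (2 * INR (k + 1) - 1) ^ t).

Definition sigma_st (s t : nat) : R :=
  Series (fun n => Sodd (n + 1) t / INR (n + 1) ^ s).

Definition lambda_odd (s : nat) : R :=
  Series (fun n => / (2 * INR (n + 1) - 1) ^ s).

From Stdlib Require Import Reals Lra Lia.
From Coquelicot Require Import Coquelicot.
Open Scope R_scope.

(* Put q = 2r - 1 and, for k <= n, a = 2k+1 and b = 2(n-k)+1, so that a + b = 2n+2.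
   Partial fractions with respect to a + b and -a (whose sum is b) expand
   1/(a^(q+1) (a+b)^s); as q + 1 is even, the signs only affect the part with poles at b.
   Summed over k <= n, this expresses [sigma_diag (q+1) s n] through the terms
   [sigma_diag x y n], whose series is sigma(y,x)/2^y, and the Cauchy-product terms
   [lambda_conv x y n] of lambda(x) lambda(y).  The term i = 0 reproduces the left-hand side;
   all other series converge except the two with an exponent 1, and these combine into the
   antidiagonal sums of a nonnegative [kernel].  Summing that double series by rows
   (Tonelli), row p gives (2p+1)^-K (ln 2 + H_p/2) with K = s + 2r - 1, because
   ln 2 = sum_m (1/(2m+1) - 1/(2m+2)) and H_p = sum_m (1/(m+1) - 1/(m+p+1)). *)

Lemma fsum_ext n f g : (forall j, (j < n)%nat -> f j = g j) -> fsum n f = fsum n g.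
Proof.
  induction n as [|n IH]; intros Hfg; simpl; [reflexivity|].
  f_equal; [apply IH; intros j Hj|]; apply Hfg; lia.
Qed.

Lemma fsum_plus n f g : fsum n (fun j => f j + g j) = fsum n f + fsum n g.
Proof. induction n as [|n IH]; simpl; [ring|]. rewrite IH; ring. Qed.

Lemma fsum_scal_l n c f : fsum n (fun j => c * f j) = c * fsum n f.
Proof. induction n as [|n IH]; simpl; [ring|]. rewrite IH; ring. Qed.

Lemma fsum_S_r n f : fsum (S n) f = fsum n f + f n.
Proof. reflexivity. Qed.

Lemma fsum_S_l n f : fsum (S n) f = f O + fsum n (fun j => f (S j)).
Proof. induction n as [|n IH]; simpl in *; [ring|]. rewrite IH; ring. Qed.

Lemma fsum_sum_f_R0 n f : fsum (S n) f = sum_f_R0 f n.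
Proof. induction n as [|n IH]; simpl in *; [ring|]. rewrite <- IH; reflexivity. Qed.

Lemma sum_f_R0_scal_l N c f : sum_f_R0 (fun k => c * f k) N = c * sum_f_R0 f N.
Proof. rewrite scal_sum. apply sum_eq; intros; ring. Qed.

Lemma sum_f_R0_fsum_comm N m (F : nat -> nat -> R) :
  sum_f_R0 (fun k => fsum m (fun j => F j k)) N = fsum m (fun j => sum_f_R0 (F j) N).
Proof.
  induction m as [|m IH]; simpl.
  - induction N as [|N IHN]; simpl; [reflexivity|]. rewrite IHN; ring.
  - rewrite sum_plus, IH; reflexivity.
Qed.

Lemma is_series_sum_f_R0 a l : is_series a l <-> is_lim_seq (fun n => sum_f_R0 a n) l.
Proof.
  split; intros H.
  - apply (is_lim_seq_ext (sum_n a)); [intro; apply sum_n_Reals|exact H].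
  - apply (is_lim_seq_ext _ (sum_n a)) in H; [exact H|intro; symmetry; apply sum_n_Reals].
Qed.

Lemma is_series_plus_R (a b : nat -> R) la lb :
  is_series a la -> is_series b lb -> is_series (fun n => a n + b n) (la + lb).
Proof. exact (is_series_plus a b la lb). Qed.

Lemma is_series_scal_l_R c (a : nat -> R) l :
  is_series a l -> is_series (fun n => c * a n) (c * l).
Proof. exact (is_series_scal_l c a l). Qed.

Lemma is_series_zero : is_series (fun _ => 0) 0.
Proof.
  apply is_series_sum_f_R0, (is_lim_seq_ext (fun _ => 0)); [|apply is_lim_seq_const].
  intros n; induction n as [|n IH]; simpl; lra.
Qed.

Lemma is_series_fsum m (F : nat -> nat -> R) L :
  (forall j, (j < m)%nat -> is_series (F j) (L j)) ->
  is_series (fun n => fsum m (fun j => F j n)) (fsum m L).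
Proof.
  induction m as [|m IH]; intros HF; simpl.
  - apply is_series_zero.
  - apply is_series_plus_R; [apply IH; intros j Hj|]; apply HF; lia.
Qed.

Definition pfrac (u w : R) (P Q : nat) : R :=
  fsum (S P) (fun j => Binomial.C (Q + j) j / (u ^ (S P - j) * w ^ (S Q + j))).

Lemma pfrac_O_l u w Q : pfrac u w 0 Q = / (u * w ^ S Q).
Proof.
  unfold pfrac; simpl. rewrite Nat.add_0_r, C_n_0, Rmult_1_r, Rplus_0_l.
  apply Rmult_1_l.
Qed.

Lemma pfrac_S_O v w Q : w <> 0 ->
  pfrac v w (S Q) 0 = / (v ^ S (S Q) * w) + / w * pfrac v w Q 0.
Proof.
  intros Hw. unfold pfrac. rewrite fsum_S_l, C_n_0, <- fsum_scal_l. f_equal.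
  - simpl. unfold Rdiv. rewrite Rmult_1_r. apply Rmult_1_l.
  - apply fsum_ext; intros j _. simpl Nat.add. rewrite !C_n_n.
    replace (S (S Q) - S j)%nat with (S Q - j)%nat by lia.
    change (w ^ S (S j)) with (w * w ^ S j). unfold Rdiv. rewrite !Rinv_mult. ring.
Qed.

Lemma pfrac_S_S u w P Q :
  pfrac u w (S P) (S Q) = / w * (pfrac u w P (S Q) + pfrac u w (S P) Q).
Proof.
  unfold pfrac. rewrite !(fsum_S_l (S P)), !C_n_0, !Nat.add_0_r, !Nat.sub_0_r.
  rewrite (fsum_ext _ _ (fun j =>
      / w * (Binomial.C (S Q + j) j / (u ^ (S P - j) * w ^ (S (S Q) + j))) +
      / w * (Binomial.C (Q + S j) (S j) / (u ^ (S (S P) - S j) * w ^ (S Q + S j))))).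
  - rewrite fsum_plus, !fsum_scal_l. simpl pow. unfold Rdiv. rewrite !Rinv_mult. ring.
  - intros j _. replace (S (S P) - S j)%nat with (S P - j)%nat by lia.
    replace (Q + S j)%nat with (S Q + j)%nat by lia.
    replace (S Q + S j)%nat with (S (S Q + j)) by lia.
    rewrite <- pascal by lia.
    replace (S (S Q) + S j)%nat with (S (S (S Q + j))) by lia.
    replace (S (S Q) + j)%nat with (S (S Q + j)) by lia.
    simpl pow. unfold Rdiv. rewrite !Rinv_mult. ring.
Qed.

Lemma inv_mul_pow_pfrac u v Q : u <> 0 -> v <> 0 -> u + v <> 0 ->
  / (u * v ^ S Q) = pfrac u (u + v) 0 Q + pfrac v (u + v) Q 0.
Proof.
  intros Hu Hv Hw. induction Q as [|Q IH].
  - rewrite !pfrac_O_l. simpl. field. repeat split; auto.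
  - rewrite pfrac_S_O, !pfrac_O_l by auto. rewrite !pfrac_O_l in IH.
    replace (pfrac v (u + v) Q 0) with (/ (u * v ^ S Q) - / (u * (u + v) ^ S Q)) by lra.
    simpl. field. repeat split; try apply pow_nonzero; auto.
Qed.

(* Iterate [1/(uv) = (1/u + 1/v)/(u+v)], the binomial coefficients arising from Pascal's rule. *)
Lemma inv_pow_mul_pfrac u v P Q : u <> 0 -> v <> 0 -> u + v <> 0 ->
  / (u ^ S P * v ^ S Q) = pfrac u (u + v) P Q + pfrac v (u + v) Q P.
Proof.
  intros Hu Hv Hw. revert Q. induction P as [|P IHP]; intros Q.
  - rewrite <- inv_mul_pow_pfrac by auto. simpl. rewrite Rmult_1_r. reflexivity.
  - induction Q as [|Q IHQ].
    + rewrite Rplus_comm, (Rplus_comm u v), <- inv_mul_pow_pfrac by (auto; lra).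
      simpl. rewrite Rmult_1_r, Rmult_comm. reflexivity.
    + rewrite !pfrac_S_S.
      replace (/ (u + v) * (pfrac u (u + v) P (S Q) + pfrac u (u + v) (S P) Q)
             + / (u + v) * (pfrac v (u + v) Q (S P) + pfrac v (u + v) (S Q) P))
        with (/ (u + v) * ((pfrac u (u + v) P (S Q) + pfrac v (u + v) (S Q) P)
             + (pfrac u (u + v) (S P) Q + pfrac v (u + v) Q (S P)))) by ring.
      rewrite <- IHP, <- IHQ.
      assert (u ^ S P <> 0) by (apply pow_nonzero; auto).
      assert (v ^ S Q <> 0) by (apply pow_nonzero; auto).
      change (u ^ S (S P)) with (u * u ^ S P). change (v ^ S (S Q)) with (v * v ^ S Q).
      field. auto.
Qed.

Lemma inv_pow_mul_pfrac_even a b s q : (-1) ^ S q = 1 -> a <> 0 -> b <> 0 -> a + b <> 0 ->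
  / (a ^ S q * (a + b) ^ S s) = pfrac (a + b) b s q +
    fsum (S q) (fun j => (-1) ^ j * Binomial.C (s + j) j / (a ^ (S q - j) * b ^ (S s + j))).
Proof.
  intros Heven Ha Hb Hab.
  assert (neg_pow : forall n, (- a) ^ n = (-1) ^ n * a ^ n).
  { intros n. rewrite <- Rpow_mult_distr. f_equal. ring. }
  assert (Hpf := inv_pow_mul_pfrac (a + b) (- a) s q Hab ltac:(lra) ltac:(lra)).
  replace (a + b + - a) with b in Hpf by ring.
  rewrite neg_pow, Heven, Rmult_1_l, Rmult_comm in Hpf. rewrite Hpf. f_equal.
  unfold pfrac. apply fsum_ext; intros j Hj.
  assert (Hsign : (-1) ^ (S q - j) * (-1) ^ j = 1).
  { rewrite <- pow_add, Nat.sub_add by lia. exact Heven. }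
  assert ((-1) ^ j <> 0) by (apply pow_nonzero; lra).
  assert (a ^ (S q - j) <> 0) by (apply pow_nonzero; auto).
  assert (b ^ (S s + j) <> 0) by (apply pow_nonzero; auto).
  rewrite neg_pow. replace ((-1) ^ (S q - j)) with (/ (-1) ^ j) by (field_simplify_eq; lra).
  field. auto.
Qed.

Definition oddR (k : nat) : R := 2 * INR k + 1.

Definition sigma_diag (x y n : nat) : R :=
  sum_f_R0 (fun k => / (oddR k ^ x * (2 * INR n + 2) ^ y)) n.

Definition lambda_conv (x y n : nat) : R :=
  sum_f_R0 (fun k => / (oddR k ^ x * oddR (n - k) ^ y)) n.

Definition kernel (K p m : nat) : R :=
  / oddR p ^ K * (/ oddR m - / (2 * INR p + 2 * INR m + 2)).

Lemma oddR_pos k : 0 < oddR k.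
Proof. unfold oddR. pose proof (pos_INR k). lra. Qed.

Lemma oddR_add_sub n k : (k <= n)%nat -> oddR k + oddR (n - k) = 2 * INR n + 2.
Proof. intros Hk. unfold oddR. rewrite minus_INR by exact Hk. ring. Qed.

Lemma lambda_conv_sym x y n : lambda_conv x y n = lambda_conv y x n.
Proof.
  unfold lambda_conv. rewrite <- sum_f_R0_skip. apply sum_eq; intros k Hk.
  replace (n - (n - k))%nat with k by lia. rewrite Rmult_comm. reflexivity.
Qed.

Lemma sigma_diag_pfrac s q n : (-1) ^ S q = 1 ->
  sigma_diag (S q) (S s) n =
  fsum (S s) (fun i => Binomial.C (q + i) i * sigma_diag (S q + i) (S s - i) n) +
  fsum (S q) (fun j => (-1) ^ j * Binomial.C (s + j) j * lambda_conv (S q - j) (S s + j) n).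
Proof.
  intros Heven. unfold sigma_diag at 1.
  rewrite (sum_eq _ (fun k => pfrac (2 * INR n + 2) (oddR (n - k)) s q +
    fsum (S q) (fun j => (-1) ^ j * Binomial.C (s + j) j /
                         (oddR k ^ (S q - j) * oddR (n - k) ^ (S s + j))))).
  2:{ intros k Hk. rewrite <- (oddR_add_sub n k Hk).
      pose proof (oddR_pos k). pose proof (oddR_pos (n - k)).
      apply inv_pow_mul_pfrac_even; auto; lra. }
  rewrite sum_plus. unfold pfrac, sigma_diag, lambda_conv. rewrite !sum_f_R0_fsum_comm.
  f_equal; apply fsum_ext; intros j _; rewrite <- sum_f_R0_scal_l.
  - rewrite <- sum_f_R0_skip. apply sum_eq; intros k Hk.
    replace (n - (n - k))%nat with k by lia. unfold Rdiv. rewrite (Rmult_comm (_ ^ _)). reflexivity.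
  - apply sum_eq; intros k _. unfold Rdiv. ring.
Qed.

Lemma sigma_diag_sub_lambda_conv K n :
  sigma_diag K 1 n - lambda_conv K 1 n = - sum_f_R0 (fun k => kernel K k (n - k)) n.
Proof.
  replace (- sum_f_R0 _ n) with (-1 * sum_f_R0 (fun k => kernel K k (n - k)) n) by ring.
  unfold sigma_diag, lambda_conv. rewrite <- sum_f_R0_scal_l, <- minus_sum.
  apply sum_eq; intros k Hk. unfold kernel.
  replace (2 * INR k + 2 * INR (n - k) + 2) with (oddR k + oddR (n - k)) by (unfold oddR; ring).
  rewrite <- (oddR_add_sub n k Hk).
  pose proof (oddR_pos k). pose proof (oddR_pos (n - k)).
  assert (oddR k ^ K <> 0) by (apply pow_nonzero; lra).
  field. repeat split; lra.
Qed.

Lemma sigma_diag_lambda_conv_kernel m q n : (-1) ^ S q = 1 ->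
  fsum m (fun i => Binomial.C (q + S i) (S i) * sigma_diag (S q + S i) (S m - i) n) +
  fsum q (fun j => (-1) ^ j * Binomial.C (S m + j) j * lambda_conv (S q - j) (S (S m) + j) n) =
  Binomial.C (S m + q) q * sum_f_R0 (fun k => kernel (S (S m) + q) k (n - k)) n.
Proof.
  intros Heven. assert (Hpf := sigma_diag_pfrac (S m) q n Heven).
  rewrite fsum_S_l, (fsum_S_r m), (fsum_S_r q) in Hpf.
  rewrite Nat.add_0_r, C_n_0, Nat.sub_0_r, Nat.add_0_r, Rmult_1_l in Hpf.
  replace (S (S m) - S m)%nat with 1%nat in Hpf by lia.
  replace (S q - q)%nat with 1%nat in Hpf by lia.
  replace (S q + S m)%nat with (S (S m) + q)%nat in Hpf by lia.
  rewrite (lambda_conv_sym 1) in Hpf.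
  replace ((-1) ^ q) with (-1) in Hpf by (simpl in Heven; lra).
  replace (Binomial.C (q + S m) (S m)) with (Binomial.C (S m + q) q) in Hpf
    by (rewrite (pascal_step1 (S m + q) q) by lia; f_equal; lia).
  pose proof (sigma_diag_sub_lambda_conv (S (S m) + q) n) as Hker.
  change (fun i => Binomial.C (q + S i) (S i) * sigma_diag (S q + S i) (S m - i) n)
    with (fun i => Binomial.C (q + S i) (S i) * sigma_diag (S q + S i) (S (S m) - S i) n).
  rewrite <- (Ropp_involutive (sum_f_R0 _ n)), <- Hker. lra.
Qed.

Lemma ex_series_le_nonneg (a b : nat -> R) :
  (forall n, 0 <= a n <= b n) -> ex_series b -> ex_series a.
Proof.
  intros Hab Hb. apply (@ex_series_le R_AbsRing R_CompleteNormedModule _ b); [|exact Hb].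
  intros n. change (Rabs (a n) <= b n). rewrite Rabs_pos_eq; apply Hab.
Qed.

Lemma sum_f_R0_le_is_series a l n :
  (forall k, 0 <= a k) -> is_series a l -> sum_f_R0 a n <= l.
Proof.
  intros Ha H. apply is_series_sum_f_R0 in H. apply (is_lim_seq_incr_compare _ _ H).
  intros m. simpl. pose proof (Ha (S m)). lra.
Qed.

Lemma is_series_telescope (h : nat -> R) :
  is_lim_seq h 0 -> is_series (fun n => h n - h (S n)) (h O).
Proof.
  intros Hh. apply is_series_sum_f_R0, (is_lim_seq_ext (fun n => h O - h (S n))).
  - intros n. induction n as [|n IH]; simpl; [reflexivity|]. rewrite <- IH; ring.
  - assert (H := is_lim_seq_minus' _ _ _ _ (is_lim_seq_const (h O))
                   (proj1 (is_lim_seq_incr_1 h 0) Hh)).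
    rewrite Rminus_0_r in H. exact H.
Qed.

Lemma is_lim_seq_inv_INR_S : is_lim_seq (fun n => / INR (n + 1)) 0.
Proof.
  replace (Finite 0) with (Rbar_inv p_infty) by reflexivity.
  apply is_lim_seq_inv; [|discriminate].
  apply (is_lim_seq_incr_n INR 1), is_lim_seq_INR.
Qed.

Lemma is_series_harmonic_tail p :
  is_series (fun m => / INR (m + 1) - / INR (m + p + 1)) (Hn p).
Proof.
  induction p as [|p IH].
  - apply (is_series_ext (fun _ => 0)); [|exact is_series_zero].
    intros n. rewrite Nat.add_0_r. cbn. ring.
  - apply (is_series_ext (fun m => (/ INR (m + 1) - / INR (m + p + 1)) +
                                   (/ INR (m + p + 1) - / INR (S m + p + 1)))).
    + intros m. replace (m + S p)%nat with (S m + p)%nat by lia. simpl. ring.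
    + apply (is_series_plus_R _ _ _ _ IH).
      apply (is_series_telescope (fun m => / INR (m + p + 1))).
      apply (is_lim_seq_incr_n (fun n => / INR (n + 1)) p), is_lim_seq_inv_INR_S.
Qed.

Lemma one_le_INR_succ n : 1 <= INR (n + 1).
Proof. rewrite plus_INR. simpl. pose proof (pos_INR n). lra. Qed.

Lemma ex_series_inv_sq : ex_series (fun n => / INR (n + 1) ^ 2).
Proof.
  apply (ex_series_le_nonneg _ (fun n => 2 * (/ INR (n + 1) - / INR (S n + 1)))).
  - intros n. pose proof (one_le_INR_succ n) as Ht.
    replace (INR (S n + 1)) with (INR (n + 1) + 1) by (rewrite !plus_INR, !S_INR; simpl; lra).
    set (t := INR (n + 1)) in *.
    split; [apply Rlt_le, Rinv_0_lt_compat, pow_lt; lra|].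
    assert (E : 2 * (/ t - / (t + 1)) - / t ^ 2 = (t - 1) / (t ^ 2 * (t + 1))) by (field; lra).
    assert (0 <= (t - 1) / (t ^ 2 * (t + 1))).
    { apply Rdiv_le_0_compat; [lra|]. apply Rmult_lt_0_compat; [apply pow_lt|]; lra. }
    lra.
  - exists (2 * / INR (0 + 1)).
    apply is_series_scal_l_R, (is_series_telescope _ is_lim_seq_inv_INR_S).
Qed.

Lemma inv_pow_le_inv_sq t x : 1 <= t -> (2 <= x)%nat -> / t ^ x <= / t ^ 2.
Proof.
  intros Ht Hx. apply Rinv_le_contravar; [apply pow_lt; lra|]. apply Rle_pow; assumption.
Qed.

Lemma INR_succ_le_oddR n : INR (n + 1) <= oddR n.
Proof. unfold oddR. rewrite plus_INR. simpl. pose proof (pos_INR n). lra. Qed.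

Lemma inv_oddR_pow_nonneg x n : 0 <= / oddR n ^ x.
Proof. apply Rlt_le, Rinv_0_lt_compat, pow_lt, oddR_pos. Qed.

Lemma ex_series_inv_oddR_pow x : (2 <= x)%nat -> ex_series (fun n => / oddR n ^ x).
Proof.
  intros Hx. apply (ex_series_le_nonneg _ (fun n => / INR (n + 1) ^ 2)); [|exact ex_series_inv_sq].
  intros n. split; [apply inv_oddR_pow_nonneg|].
  pose proof (one_le_INR_succ n). pose proof (INR_succ_le_oddR n).
  apply (Rle_trans _ (/ oddR n ^ 2)); [apply inv_pow_le_inv_sq; [lra|exact Hx]|].
  apply Rinv_le_contravar; [apply pow_lt; lra|]. apply pow_incr; lra.
Qed.

Lemma is_series_lambda_odd x : (2 <= x)%nat -> is_series (fun n => / oddR n ^ x) (lambda_odd x).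
Proof.
  intros Hx. unfold lambda_odd.
  rewrite (Series_ext _ (fun n => / oddR n ^ x)).
  - apply Series_correct, ex_series_inv_oddR_pow, Hx.
  - intros n. unfold oddR. rewrite plus_INR. simpl. f_equal. f_equal. ring.
Qed.

Lemma is_series_lambda_conv x y : (2 <= x)%nat -> (2 <= y)%nat ->
  is_series (lambda_conv x y) (lambda_odd x * lambda_odd y).
Proof.
  intros Hx Hy. apply (is_series_ext (fun n => sum_f_R0 (fun k => / oddR k ^ x * / oddR (n - k) ^ y) n)).
  - intros n. apply sum_eq; intros k _. rewrite Rinv_mult. reflexivity.
  - apply (is_series_mult_pos (fun k => / oddR k ^ x) (fun k => / oddR k ^ y));
      auto using is_series_lambda_odd, inv_oddR_pow_nonneg.
Qed.

Lemma Sodd_succ_eq n x : Sodd (n + 1) x = sum_f_R0 (fun k => / oddR k ^ x) n.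
Proof.
  unfold Sodd. rewrite Nat.add_1_r, fsum_sum_f_R0. apply sum_eq; intros k _.
  unfold oddR. rewrite plus_INR. simpl. f_equal. f_equal. ring.
Qed.

Lemma is_series_sigma_diag x y : (2 <= x)%nat -> (2 <= y)%nat ->
  is_series (sigma_diag x y) (sigma_st y x / 2 ^ y).
Proof.
  intros Hx Hy. unfold sigma_st.
  assert (Hsum : ex_series (fun n => Sodd (n + 1) x / INR (n + 1) ^ y)).
  { apply (ex_series_le_nonneg _ (fun n => lambda_odd x * / INR (n + 1) ^ 2)).
    - intros n. rewrite Sodd_succ_eq. pose proof (one_le_INR_succ n).
      assert (0 <= sum_f_R0 (fun k => / oddR k ^ x) n)
        by (apply cond_pos_sum; intros; apply inv_oddR_pow_nonneg).
      assert (0 <= / INR (n + 1) ^ y) by (apply Rlt_le, Rinv_0_lt_compat, pow_lt; lra).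
      split; [apply Rmult_le_pos; assumption|].
      apply Rmult_le_compat; auto; [|apply inv_pow_le_inv_sq; auto].
      apply sum_f_R0_le_is_series; [intros; apply inv_oddR_pow_nonneg|].
      apply is_series_lambda_odd, Hx.
    - destruct ex_series_inv_sq as [l Hl].
      exists (lambda_odd x * l). apply is_series_scal_l_R, Hl. }
  apply (is_series_ext (fun n => Sodd (n + 1) x / INR (n + 1) ^ y * / 2 ^ y)).
  - intros n. unfold sigma_diag. rewrite Sodd_succ_eq. unfold Rdiv.
    rewrite Rmult_assoc, Rmult_comm, scal_sum. apply sum_eq; intros k _.
    replace (2 * INR n + 2) with (2 * INR (n + 1)) by (rewrite plus_INR; simpl; ring).
    pose proof (oddR_pos k). pose proof (one_le_INR_succ n).
    rewrite Rpow_mult_distr. field. repeat split; apply pow_nonzero; lra.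
  - apply is_series_scal_r, Series_correct, Hsum.
Qed.

Lemma ln_le_sub_1 z : 0 < z -> ln z <= z - 1.
Proof. intros Hz. pose proof (exp_ineq1_le (ln z)). rewrite exp_ln in H by exact Hz. lra. Qed.

Lemma ln_succ_sub_bounds x : 0 < x -> / (x + 1) <= ln (x + 1) - ln x <= / x.
Proof.
  intros Hx. split.
  - assert (H := ln_le_sub_1 (x / (x + 1)) ltac:(apply Rdiv_lt_0_compat; lra)).
    rewrite ln_div in H by lra. replace (x / (x + 1) - 1) with (- / (x + 1)) in H by (field; lra).
    lra.
  - assert (H := ln_le_sub_1 ((x + 1) / x) ltac:(apply Rdiv_lt_0_compat; lra)).
    rewrite ln_div in H by lra. replace ((x + 1) / x - 1) with (/ x) in H by (field; lra).
    exact H.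
Qed.

Lemma sum_inv_ln_bounds x N : 1 < x ->
  ln (x + INR N + 1) - ln x <= sum_f_R0 (fun k => / (x + INR k)) N <= ln (x + INR N) - ln (x - 1).
Proof.
  intros Hx. induction N as [|N IH].
  - simpl. pose proof (ln_succ_sub_bounds x ltac:(lra)).
    pose proof (ln_succ_sub_bounds (x - 1) ltac:(lra)).
    replace (x - 1 + 1) with x in * by ring. rewrite !Rplus_0_r. lra.
  - rewrite tech5, S_INR. pose proof (pos_INR N).
    pose proof (ln_succ_sub_bounds (x + INR N + 1) ltac:(lra)).
    pose proof (ln_succ_sub_bounds (x + INR N) ltac:(lra)).
    replace (x + (INR N + 1)) with (x + INR N + 1) by ring. lra.
Qed.

Lemma sum_alt_harmonic N :
  sum_f_R0 (fun m => / oddR m - / (2 * INR m + 2)) N =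
  sum_f_R0 (fun k => / (INR N + 2 + INR k)) N.
Proof.
  induction N as [|N IH].
  - unfold oddR. simpl. field.
  - set (G := fun k => / (INR N + 2 + INR k)).
    assert (HG : sum_f_R0 (fun k => / (INR (S N) + 2 + INR k)) (S N) =
                 sum_f_R0 G (S (S N)) - G O).
    { rewrite (decomp_sum G (S (S N))) by lia. simpl pred.
      rewrite (sum_eq _ (fun k => G (S k))); [ring|].
      intros k _. unfold G. rewrite !S_INR. f_equal. ring. }
    rewrite HG, tech5, IH, !tech5. fold G. unfold G, oddR.
    rewrite !S_INR, INR_0. pose proof (pos_INR N). field. lra.
Qed.

Lemma is_series_ln2 : is_series (fun m => / oddR m - / (2 * INR m + 2)) (ln 2).
Proof.
  apply is_series_sum_f_R0, (is_lim_seq_ext (fun N => sum_f_R0 (fun k => / (INR N + 2 + INR k)) N)).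
  { intros N. symmetry. apply sum_alt_harmonic. }
  apply (is_lim_seq_le_le (fun N => ln 2 - / INR (N + 1)) _ (fun _ => ln 2)).
  - intros N. pose proof (pos_INR N).
    destruct (sum_inv_ln_bounds (INR N + 2) N ltac:(lra)) as [Hlow Hup].
    assert (Eup : ln (INR N + 2 + INR N) - ln (INR N + 2 - 1) = ln 2).
    { replace (INR N + 2 + INR N) with (2 * (INR N + 1)) by ring.
      replace (INR N + 2 - 1) with (INR N + 1) by ring. rewrite ln_mult by lra. ring. }
    assert (Elow : ln (INR N + 2 + INR N + 1 + 1) - ln (INR N + 2) = ln 2).
    { replace (INR N + 2 + INR N + 1 + 1) with (2 * (INR N + 2)) by ring.
      rewrite ln_mult by lra. ring. }
    pose proof (ln_succ_sub_bounds (INR N + 2 + INR N + 1) ltac:(lra)) as [_ Hstep].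
    assert (/ (INR N + 2 + INR N + 1) <= / INR (N + 1)).
    { rewrite plus_INR. simpl. apply Rinv_le_contravar; lra. }
    split; lra.
  - assert (H := is_lim_seq_minus' _ _ _ _ (is_lim_seq_const (ln 2)) is_lim_seq_inv_INR_S).
    rewrite Rminus_0_r in H. exact H.
  - apply is_lim_seq_const.
Qed.

Lemma is_series_kernel_row K p :
  is_series (kernel K p) (/ oddR p ^ K * (ln 2 + / 2 * Hn p)).
Proof.
  apply (is_series_ext (fun m => / oddR p ^ K * ((/ oddR m - / (2 * INR m + 2)) +
                                 / 2 * (/ INR (m + 1) - / INR (m + p + 1))))).
  - intros m. unfold kernel, oddR. rewrite !plus_INR. simpl.
    pose proof (pos_INR m). pose proof (pos_INR p). f_equal. field. repeat split; lra.
  - apply is_series_scal_l_R, is_series_plus_R; [exact is_series_ln2|].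
    apply is_series_scal_l_R, is_series_harmonic_tail.
Qed.

Lemma sum_f_R0_le_mono f a b : (forall k, 0 <= f k) -> (a <= b)%nat -> sum_f_R0 f a <= sum_f_R0 f b.
Proof. intros Hf Hab. induction Hab as [|b _ IH]; [lra|]. rewrite tech5. pose proof (Hf (S b)). lra. Qed.

Lemma sum_f_R0_antidiag (h : nat -> nat -> R) N :
  sum_f_R0 (fun n => sum_f_R0 (fun k => h k (n - k)%nat) n) N =
  sum_f_R0 (fun k => sum_f_R0 (h k) (N - k)) N.
Proof.
  induction N as [|N IH]; [reflexivity|].
  rewrite tech5, IH, (tech5 (fun k => h k (S N - k)%nat)),
    (tech5 (fun k => sum_f_R0 (h k) (S N - k))), Nat.sub_diag.
  rewrite (sum_eq (fun k => sum_f_R0 (h k) (S N - k))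
                  (fun k => sum_f_R0 (h k) (N - k) + h k (S N - k)%nat)).
  - rewrite sum_plus. change (sum_f_R0 (h (S N)) 0) with (h (S N) 0%nat). ring.
  - intros k Hk. replace (S N - k)%nat with (S (N - k)) by lia. apply tech5.
Qed.

Lemma is_lim_seq_sum_f_R0 (F : nat -> nat -> R) (L : nat -> R) P :
  (forall k, is_lim_seq (F k) (L k)) ->
  is_lim_seq (fun M => sum_f_R0 (fun k => F k M) P) (sum_f_R0 L P).
Proof.
  intros HF. induction P as [|P IH]; [apply HF|]. apply is_lim_seq_plus'; auto.
Qed.

Lemma is_series_antidiag_nonneg (g : nat -> nat -> R) (row : nat -> R) (L : R) :
  (forall p m, 0 <= g p m) -> (forall p, is_series (g p) (row p)) -> is_series row L ->
  is_series (fun n => sum_f_R0 (fun k => g k (n - k)%nat) n) L.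
Proof.
  intros Hg Hrow HL.
  assert (row_nonneg : forall p, 0 <= row p).
  { intros p. apply (Rle_trans _ (sum_f_R0 (g p) 0)); [apply Hg|].
    apply sum_f_R0_le_is_series; auto. }
  set (D := fun N => sum_f_R0 (fun n => sum_f_R0 (fun k => g k (n - k)%nat) n) N).
  assert (D_incr : forall N, D N <= D (S N)).
  { intros N. unfold D. rewrite tech5. pose proof (cond_pos_sum _ (S N) (fun k => Hg k (S N - k)%nat)). lra. }
  assert (D_le : forall N, D N <= L).
  { intros N. unfold D. rewrite sum_f_R0_antidiag.
    apply (Rle_trans _ (sum_f_R0 row N)); [|apply sum_f_R0_le_is_series; auto].
    apply sum_Rle; intros k _. apply sum_f_R0_le_is_series; auto. }
  assert (D_ge : forall P M, sum_f_R0 (fun k => sum_f_R0 (g k) M) P <= D (P + M)%nat).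
  { intros P M. unfold D. rewrite sum_f_R0_antidiag.
    apply (Rle_trans _ (sum_f_R0 (fun k => sum_f_R0 (g k) (P + M - k)) P)).
    - apply sum_Rle; intros k Hk. apply sum_f_R0_le_mono; auto. lia.
    - apply sum_f_R0_le_mono; [intros; apply cond_pos_sum; auto|lia]. }
  destruct (ex_finite_lim_seq_incr D L D_incr D_le) as [l Hl].
  apply is_series_sum_f_R0. fold D.
  replace L with l; [exact Hl|]. apply Rle_antisym.
  - exact (is_lim_seq_le D (fun _ => L) l L D_le Hl (is_lim_seq_const L)).
  - assert (row_le : forall P, sum_f_R0 row P <= l).
    { intros P. change (Rbar_le (sum_f_R0 row P) l).
      apply (is_lim_seq_le (fun M => sum_f_R0 (fun k => sum_f_R0 (g k) M) P) (fun _ => l));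
        [|apply is_lim_seq_sum_f_R0; intros k; apply is_series_sum_f_R0, Hrow|apply is_lim_seq_const].
      intros M. apply (Rle_trans _ _ _ (D_ge P M)). exact (is_lim_seq_incr_compare D l Hl D_incr _). }
    exact (is_lim_seq_le _ (fun _ => l) L l row_le (proj1 (is_series_sum_f_R0 _ _) HL) (is_lim_seq_const l)).
Qed.

Lemma Hn_bounds p : 0 <= Hn p <= INR p.
Proof.
  induction p as [|p IH]; [unfold Hn; simpl; lra|].
  unfold Hn in *. simpl fsum. rewrite S_INR.
  pose proof (one_le_INR_succ p).
  assert (0 < / INR (p + 1) <= 1).
  { split; [apply Rinv_0_lt_compat; lra|]. rewrite <- Rinv_1. apply Rinv_le_contravar; lra. }
  lra.
Qed.

Lemma is_series_Hn_inv_oddR_pow K : (3 <= K)%nat ->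
  is_series (fun p => Hn p / oddR p ^ K)
    (Series (fun n => Hn (n + 1) / (2 * INR (n + 1) + 1) ^ K)).
Proof.
  intros HK.
  assert (Hsum : ex_series (fun p => Hn p / oddR p ^ K)).
  { apply (ex_series_le_nonneg _ (fun p => / oddR p ^ (K - 1)));
      [|apply ex_series_inv_oddR_pow; lia].
    intros p. pose proof (Hn_bounds p). pose proof (oddR_pos p).
    assert (INR p <= oddR p) by (unfold oddR; lra).
    replace K with (S (K - 1)) at 1 2 by lia. simpl pow.
    assert (0 < oddR p ^ (K - 1)) by (apply pow_lt; lra).
    unfold Rdiv. rewrite Rinv_mult. split.
    - apply Rmult_le_pos; [lra|]. apply Rlt_le, Rmult_lt_0_compat; apply Rinv_0_lt_compat; lra.
    - rewrite <- Rmult_assoc. rewrite <- (Rmult_1_l (/ oddR p ^ (K - 1))) at 2.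
      apply Rmult_le_compat_r; [apply Rlt_le, Rinv_0_lt_compat; lra|].
      apply (Rmult_le_reg_r (oddR p)); [lra|]. rewrite Rmult_assoc, Rinv_l by lra. lra. }
  rewrite <- (Series_ext (fun k => Hn (S k) / oddR (S k) ^ K)).
  - rewrite <- (Rplus_0_l (Series _)).
    replace 0 with (Hn 0 / oddR 0 ^ K) by (unfold Hn; simpl; unfold Rdiv; ring).
    rewrite <- (Series_incr_1 (fun p => Hn p / oddR p ^ K)) by exact Hsum.
    apply Series_correct, Hsum.
  - intros n. unfold oddR. rewrite Nat.add_1_r. reflexivity.
Qed.

Lemma is_series_kernel_antidiag K : (3 <= K)%nat ->
  is_series (fun n => sum_f_R0 (fun k => kernel K k (n - k)%nat) n)
    (ln 2 * lambda_odd K + / 2 * Series (fun n => Hn (n + 1) / (2 * INR (n + 1) + 1) ^ K)).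
Proof.
  intros HK. apply (is_series_antidiag_nonneg _ (fun p => / oddR p ^ K * (ln 2 + / 2 * Hn p))).
  - intros p m. unfold kernel. apply Rmult_le_pos; [apply inv_oddR_pow_nonneg|].
    unfold oddR. pose proof (pos_INR p). pose proof (pos_INR m).
    assert (/ (2 * INR p + 2 * INR m + 2) <= / (2 * INR m + 1)) by (apply Rinv_le_contravar; lra).
    lra.
  - apply is_series_kernel_row.
  - apply (is_series_ext (fun p => ln 2 * / oddR p ^ K + / 2 * (Hn p / oddR p ^ K))).
    + intros p. cbn. unfold Rdiv. ring.
    + apply is_series_plus_R; apply is_series_scal_l_R;
        [apply is_series_lambda_odd; lia|apply is_series_Hn_inv_oddR_pow, HK].
Qed.

Lemma sigma_lambda_identity m q : (-1) ^ S q = 1 ->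
  fsum m (fun i => Binomial.C (q + S i) (S i) * (sigma_st (S m - i) (S q + S i) / 2 ^ (S m - i))) +
  fsum q (fun j => (-1) ^ j * Binomial.C (S m + j) j *
                   (lambda_odd (S q - j) * lambda_odd (S (S m) + j))) =
  Binomial.C (S m + q) q * (ln 2 * lambda_odd (S (S m) + q) +
    / 2 * Series (fun n => Hn (n + 1) / (2 * INR (n + 1) + 1) ^ (S (S m) + q))).
Proof.
  intros Heven.
  assert (Hq : (1 <= q)%nat) by (destruct q; [simpl in Heven; lra|lia]).
  set (u := fun n =>
    fsum m (fun i => Binomial.C (q + S i) (S i) * sigma_diag (S q + S i) (S m - i) n) +
    fsum q (fun j => (-1) ^ j * Binomial.C (S m + j) j * lambda_conv (S q - j) (S (S m) + j) n)).
  assert (Hlhs : is_series u (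
    fsum m (fun i => Binomial.C (q + S i) (S i) * (sigma_st (S m - i) (S q + S i) / 2 ^ (S m - i))) +
    fsum q (fun j => (-1) ^ j * Binomial.C (S m + j) j *
                     (lambda_odd (S q - j) * lambda_odd (S (S m) + j))))).
  { apply is_series_plus_R; apply is_series_fsum; intros j Hj; apply is_series_scal_l_R.
    - apply is_series_sigma_diag; lia.
    - apply is_series_lambda_conv; lia. }
  assert (Hrhs := is_series_scal_l_R (Binomial.C (S m + q) q) _ _
                    (is_series_kernel_antidiag (S (S m) + q) ltac:(lia))).
  apply (is_series_ext _ u) in Hrhs.
  - rewrite <- (is_series_unique _ _ Hlhs). exact (is_series_unique _ _ Hrhs).
  - intros n. symmetry. exact (sigma_diag_lambda_conv_kernel m q n Heven).
Qed.

Theorem mainTheorem11 (s r : nat) (hs : (2 <= s)%nat) (hr : (1 <= r)%nat) :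
  fsum (s - 2) (fun k => let i := (k + 1)%nat in
      2 ^ (i - 1) * Binomial.C (2 * r + i - 1)%nat i
        * sigma_st (s - i)%nat (2 * r + i)%nat)
  + 2 ^ (s - 1) * fsum (2 * r - 1) (fun j =>
      (-1) ^ j * Binomial.C (s + j - 1)%nat j * lambda_odd (s + j)%nat
        * lambda_odd (2 * r - j)%nat)
  - 2 ^ (s - 2) * Binomial.C (s + 2 * r - 2)%nat (s - 1)%nat
      * Series (fun n => Hn (n + 1) / (2 * INR (n + 1) + 1) ^ (s + 2 * r - 1))
  - 2 ^ (s - 1) * Binomial.C (s + 2 * r - 2)%nat (s - 1)%nat
      * lambda_odd (s + 2 * r - 1)%nat * ln 2
  = 0.
Proof.
  destruct s as [|[|m]]; try lia.
  assert (Hq : (2 * r)%nat = S (2 * r - 1)) by lia.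
  set (q := (2 * r - 1)%nat) in *. rewrite Hq. clearbody q.
  assert (Heven : (-1) ^ S q = 1) by (rewrite <- Hq; apply pow_1_even).
  replace (S (S m) - 2)%nat with m by lia. replace (S (S m) - 1)%nat with (S m) by lia.
  replace (S (S m) + S q - 2)%nat with (S m + q)%nat by lia.
  replace (S (S m) + S q - 1)%nat with (S (S m) + q)%nat by lia.
  rewrite (pascal_step1 (S m + q) (S m)) by lia. replace (S m + q - S m)%nat with q by lia.
  assert (Hsigma : fsum m (fun k => let i := (k + 1)%nat in
      2 ^ (i - 1) * Binomial.C (S q + i - 1) i * sigma_st (S (S m) - i) (S q + i)) =
    2 ^ S m * fsum m (fun i =>
      Binomial.C (q + S i) (S i) * (sigma_st (S m - i) (S q + S i) / 2 ^ (S m - i)))).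
  { rewrite <- fsum_scal_l. apply fsum_ext; intros k Hk. cbv zeta.
    replace (k + 1)%nat with (S k) by lia. replace (S q + S k - 1)%nat with (q + S k)%nat by lia.
    replace (2 ^ S m) with (2 ^ (S m - k) * 2 ^ (S k - 1)) by (rewrite <- pow_add; f_equal; lia).
    assert (2 ^ (S m - k) <> 0) by (apply pow_nonzero; lra).
    simpl Nat.sub. field. auto. }
  assert (Hlambda : fsum q (fun j => (-1) ^ j * Binomial.C (S (S m) + j - 1) j *
                                      lambda_odd (S (S m) + j) * lambda_odd (S q - j)) =
    fsum q (fun j => (-1) ^ j * Binomial.C (S m + j) j *
                     (lambda_odd (S q - j) * lambda_odd (S (S m) + j)))).
  { apply fsum_ext; intros j _. replace (S (S m) + j - 1)%nat with (S m + j)%nat by lia. ring. }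
  rewrite Hsigma, Hlambda, <- Rmult_plus_distr_l, sigma_lambda_identity by assumption.
  simpl pow. field.
Qed.
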